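(* Let $\mathbb Y$ be the stationary Markov chain on $I$ with transition matrix $Q$ and stationary law $\mu$, and $\mathbb Y^{(\mathcal K)}$ the stationary Markov chain on $I^2\times\{0,1\}$ with transition matrix $\mathcal K$ and stationary law $\zeta$. Then $$h(\mathbb Y^{(\mathcal K)})=h(\mathbb Y)+\sum_{i,j\in I}\mu(i)Q(i,j)\,H(\theta_{i,j}),$$ where $H(\theta)=-\theta\log\theta-(1-\theta)\log(1-\theta)$, and $$h(\mathbb Y^{(\mathcal K)})=-\sum_{i\in I}\mu(i)P(i,\mathcal E)\log P(i,\mathcal E)-(1-\gamma)\sum_{j\in I}\mu(j)\log\mu(j)-\sum_{i,j\in I}\mu(i)P(i,j)\log P(i,j).$$
   Context: $I$ and $\mathcal E$ are disjoint countable sets, $\mathcal E\ne\emptyset$; $P$ is a stochastic matrix on $I\cup\mathcal E$ with all $\epsilon\in\mathcal E$ absorbing, irreducible restriction $P_I$ to $I$, $\sum_{i\in I}P(i,\mathcal E)>0$ where $P(i,\mathcal E)=\sum_{\epsilon\in\mathcal E}P(i,\epsilon)$, and $\mathcal E$ reached a.s. from every $i\in I$. $\mu$ is a quasi-stationary distribution of $P_I$: a probability on $I$ with $\mu^tP_I=\gamma\mu^t$, $\gamma=\sum_{i,j\in I}\mu(i)P(i,j)\in(0,1)$ (so $\mu>0$ and $\sum_i\mu(i)P(i,\mathcal E)=1-\gamma$). $Q(i,j)=P(i,j)+P(i,\mathcal E)\mu(j)$ ($i,j\in I$) is stochastic with stationary law $\mu$; $\theta_{i,j}=P(i,j)/Q(i,j)$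 when $Q(i,j)>0$. The matrix $\mathcal K$ on $I^2\times\{0,1\}$ is $\mathcal K((i,j,a),(l,k,b))=0$ if $l\neq j$ and $\mathcal K((i,j,a),(j,k,b))=P(j,k)\mathbf 1(b=1)+P(j,\mathcal E)\mu(k)\mathbf 1(b=0)$; its stationary law is $\zeta(i,j,a)=\mu(i)P(i,j)\mathbf 1(a=1)+\mu(i)P(i,\mathcal E)\mu(j)\mathbf 1(a=0)$. For a stationary Markov chain $\mathbb Z$ with transition matrix $R$ and stationary law $\nu$, its entropy is $h(\mathbb Z)=-\sum_{a}\nu(a)\sum_bR(a,b)\log R(a,b)$ (with $0\log0=0$); in particular $h(\mathbb Y)=-\sum_{i,j\in I}\mu(i)Q(i,j)\log Q(i,j)$. *)

From HB Require Import structures.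
From mathcomp Require Import all_boot all_order all_algebra.
From mathcomp Require Import all_classical all_reals all_analysis.
From Stdlib Require Import Relation_Operators.
Set Implicit Arguments. Unset Strict Implicit. Unset Printing Implicit Defensive.
Import Order.TTheory GRing.Theory Num.Theory.
Local Open Scope classical_set_scope.
Local Open Scope ring_scope.

Section Defs.
Variable R : realType.

Definition negxlogx (x : R) : R := if x == 0 then 0 else - (x * ln x).

Definition Hbin (t : R) : R := negxlogx t + negxlogx (1 - t).

Definition chain_entropy (S : choiceType) (Rm : S -> S -> R) (nu : S -> R)
  : \bar R :=
  \esum_(a in [set: S]) \esum_(b in [set: S]) (nu a * negxlogx (Rm a b))%:E.

Variables (I E : countType).

Definition PtoE (P : I + E -> I + E -> R) (i : I) : R :=
  fine (\esum_(e in [set: E]) (P (inl i) (inr e))%:E).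

Definition Qmat (P : I + E -> I + E -> R) (mu : I -> R) (i j : I) : R :=
  P (inl i) (inl j) + PtoE P i * mu j.

(* theta_{i,j} = P(i,j) / Q(i,j) (only used when Q(i,j) > 0) *)
Definition theta (P : I + E -> I + E -> R) (mu : I -> R) (i j : I) : R :=
  P (inl i) (inl j) / Qmat P mu i j.

(* the matrix K on I^2 x {0,1} (b = true encodes 1) *)
Definition Kmat (P : I + E -> I + E -> R) (mu : I -> R)
  (x y : I * I * bool) : R :=
  let: (i, j, a) := x in let: (l, k, b) := y in
  if l != j then 0 else
  if b then P (inl j) (inl k) else PtoE P j * mu k.

Definition zeta (P : I + E -> I + E -> R) (mu : I -> R) (x : I * I * bool) : R :=
  let: (i, j, a) := x in
  if a then mu i * P (inl i) (inl j) else mu i * PtoE P i * mu j.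

Fixpoint Pn (P : I + E -> I + E -> R) (n : nat) (x y : I + E) : \bar R :=
  match n with
  | 0 => (if x == y then 1 else 0)%:E
  | n'.+1 => \esum_(z in [set: I + E]) (Pn P n' x z * (P z y)%:E)%E
  end.

Definition irreducible_I (P : I + E -> I + E -> R) : Prop :=
  forall i j : I,
    clos_refl_trans I (fun a b => 0 < P (inl a) (inl b)) i j.

(* E is reached almost surely from i: since E is absorbing, the probability
   P^n(i, E) of being in E at time n increases to the hitting probability *)
Definition reaches_E_as (P : I + E -> I + E -> R) (i : I) : Prop :=
  (fun n => \esum_(e in [set: E]) Pn P n (inl i) (inr e)) @ \oo --> 1%E.

End Defs.

From HB Require Import structures.
From mathcomp Require Import all_boot all_order all_algebra.
From mathcomp Require Import all_classical all_reals all_analysis.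
From mathcomp Require Import ring lra.
Import Order.TTheory GRing.Theory Num.Theory.
Local Open Scope classical_set_scope.
Local Open Scope ring_scope.

(* The chain K at (i, j, a) forgets i and a: it moves to (j, k, 1) with
   probability P(j,k) and to (j, k, 0) with probability P(j,E) mu(k).  The
   (i, a)-marginal of zeta at j is (mu Q)(j) = mu(j), so with
   eta(x) = -x log x,
     h(K) = sum_j mu(j) sum_k [eta(P(j,k)) + eta(P(j,E) mu(k))].
   The two weights add up to Q(j,k), and grouping them gives
   eta(Q(j,k)) + Q(j,k) H(theta_{j,k}): this is the first formula.  Expanding
   eta(P(j,E) mu(k)) = P(j,E) eta(mu(k)) + mu(k) eta(P(j,E)) and using
   sum_j mu(j) P(j,E) = 1 - gamma gives the second. *)

Section esum_nonneg.
Variable R : realType.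
Local Open Scope ereal_scope.

Lemma esumZl (T : choiceType) (S : set T) (c : R) (a : T -> \bar R) :
  (0 <= c)%R -> (forall i, 0 <= a i) ->
  \esum_(i in S) (c%:E * a i) = c%:E * \esum_(i in S) a i.
Proof.
move=> c0 a0; rewrite /esum -ereal_supZl //; last first.
  by apply/set0P; exists (\sum_(x \in set0) a x); exists set0 => //; exact: fsets_set0.
rewrite image_comp; congr ereal_sup; apply: eq_imagel => A _ /=.
by rewrite ge0_mule_fsumr.
Qed.

Lemma esumZr (T : choiceType) (S : set T) (c : R) (a : T -> \bar R) :
  (0 <= c)%R -> (forall i, 0 <= a i) ->
  \esum_(i in S) (a i * c%:E) = (\esum_(i in S) a i) * c%:E.
Proof.
by move=> c0 a0; rewrite muleC -esumZl //; apply: eq_esum => i _; exact: muleC.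
Qed.

Lemma esumT_ge (T : choiceType) (a : T -> \bar R) k :
  (forall x, 0 <= a x) -> a k <= \esum_(x in [set: T]) a x.
Proof.
move=> a0; apply: esum_ge; exists [set k]; last by rewrite fsbig_set1.
by split=> //; exact: finite_set1.
Qed.

Lemma esumT_single (T : choiceType) (j : T) (f : T -> \bar R) :
  (forall x, x <> j -> f x = 0) -> 0 <= f j ->
  \esum_(x in [set: T]) f x = f j.
Proof.
move=> fz fj; have f0 x : [set: T] x -> 0 <= f x.
  by move=> _; case: (pselect (x = j)) => [->|/fz ->].
rewrite (esumID [set j]) // setTI esum_set1 // esum1 ?adde0 //.
by move=> x [_ /= xj]; exact: fz.
Qed.

Lemma esumT_bool (f : bool -> \bar R) : 0 <= f true -> 0 <= f false ->
  \esum_(x in [set: bool]) f x = f true + f false.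
Proof.
move=> ft ff; rewrite (esumID [set true]); last by move=> [].
rewrite setTI esum_set1 //; congr (_ + _).
rewrite (_ : _ `&` _ = [set false]) ?esum_set1 //.
by apply/seteqP; split => [[] [_ /=]|[] /=] //; split.
Qed.

Lemma esumT_pair (T1 T2 : choiceType) (f : T1 * T2 -> \bar R) :
  (forall x, 0 <= f x) ->
  \esum_(x in [set: T1 * T2]) f x =
  \esum_(a in [set: T1]) \esum_(b in [set: T2]) f (a, b).
Proof.
move=> f0; rewrite esum_esum //.
rewrite (_ : [set: T1] `*`` (fun=> [set: T2]) = [set: T1 * T2]).
  by apply: eq_esum => -[].
by apply/seteqP; split.
Qed.

Lemma exchange_esum (T1 T2 : choiceType) (f : T1 -> T2 -> \bar R) :
  (forall a b, 0 <= f a b) ->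
  \esum_(a in [set: T1]) \esum_(b in [set: T2]) f a b =
  \esum_(b in [set: T2]) \esum_(a in [set: T1]) f a b.
Proof.
move=> f0; rewrite -(@esumT_pair _ _ (fun x => f x.1 x.2)) //.
rewrite -(@esumT_pair _ _ (fun x => f x.2 x.1)) //.
rewrite (reindex_esum [set: T2 * T1] [set: T1 * T2] (fun x => (x.2, x.1))) //.
split=> //=.
- by move=> [? ?] [? ?] _ _ [-> ->].
- by move=> [i j] _; exists (j, i).
Qed.

Lemma esumT_sum (T1 T2 : choiceType) (f : T1 + T2 -> \bar R) :
  (forall x, 0 <= f x) ->
  \esum_(x in [set: T1 + T2]) f x =
  \esum_(a in [set: T1]) f (inl a) + \esum_(b in [set: T2]) f (inr b).
Proof.
move=> f0; rewrite (esumID (range inl)) //; congr (_ + _).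
  by rewrite setTI esum_image // => ? ? _ _ [].
rewrite (_ : _ `&` _ = inr @` setT).
  by rewrite esum_image // => ? ? _ _ [].
apply/seteqP; split => [[x|x] [_ /=]|x [y _ <-]] //=.
- by move=> h; exfalso; apply: h; exists x.
- by exists x.
- by split => // -[z _].
Qed.

Lemma esum2D (T1 T2 : choiceType) (a b : T1 -> T2 -> \bar R) :
  (forall i j, 0 <= a i j) -> (forall i j, 0 <= b i j) ->
  \esum_(i in [set: T1]) \esum_(j in [set: T2]) (a i j + b i j) =
  \esum_(i in [set: T1]) \esum_(j in [set: T2]) a i j +
  \esum_(i in [set: T1]) \esum_(j in [set: T2]) b i j.
Proof.
move=> a0 b0; rewrite -esumD; last 2 first.
- by move=> i _; exact: esum_ge0.
- by move=> i _; exact: esum_ge0.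
by apply: eq_esum => i _; rewrite esumD.
Qed.

End esum_nonneg.

Section negxlogx.
Variable R : realType.
Implicit Types x y p q t : R.

Lemma negxlogx0 : negxlogx (0 : R) = 0.
Proof. by rewrite /negxlogx eqxx. Qed.

Lemma negxlogx_ge0 x : 0 <= x <= 1 -> 0 <= negxlogx x.
Proof.
case/andP=> x0 x1; rewrite /negxlogx; case: eqP => // _.
by rewrite oppr_ge0 mulr_ge0_le0 // ln_le0.
Qed.

Lemma negxlogxM x y : 0 <= x -> 0 <= y ->
  negxlogx (x * y) = x * negxlogx y + y * negxlogx x.
Proof.
rewrite /negxlogx !le0r => /orP[/eqP->|x0]; first by rewrite !(mul0r, eqxx, mulr0, addr0).
case/orP=> [/eqP->|y0]; first by rewrite !(mulr0, eqxx, mul0r, add0r).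
by rewrite mulf_eq0 !gt_eqF // lnM ?posrE //=; ring.
Qed.

Lemma mul_negxlogx_div x t : 0 <= x -> 0 < t ->
  t * negxlogx (x / t) = negxlogx x + x * ln t.
Proof.
rewrite /negxlogx le0r => /orP[/eqP->|x0] t0; first by rewrite !(mul0r, eqxx, mulr0, addr0).
rewrite mulf_eq0 invr_eq0 !gt_eqF // lnM ?posrE ?invr_gt0 // lnV ?posrE //=.
by field; rewrite gt_eqF.
Qed.

Lemma negxlogxD_Hbin p q : 0 <= p -> 0 <= q -> 0 < p + q ->
  negxlogx p + negxlogx q = negxlogx (p + q) + (p + q) * Hbin (p / (p + q)).
Proof.
move=> p0 q0 pq0; rewrite /Hbin mulrDr mul_negxlogx_div //.
have -> : 1 - p / (p + q) = q / (p + q) by field; rewrite gt_eqF.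
by rewrite mul_negxlogx_div // /negxlogx (gt_eqF pq0); ring.
Qed.

Lemma Hbin_ge0 t : 0 <= t <= 1 -> 0 <= Hbin t.
Proof.
case/andP=> t0 t1; rewrite /Hbin addr_ge0 // negxlogx_ge0 //; apply/andP; lra.
Qed.

End negxlogx.

Section quasi_stationary_chain.
Variables (R : realType) (I E : countType).
Variables (P : I + E -> I + E -> R) (mu : I -> R) (gamma : R).
Hypothesis P_ge0 : forall x y, 0 <= P x y.
Hypothesis P_sum1 : forall x, \esum_(y in [set: I + E]) (P x y)%:E = 1%E.
Hypothesis mu_ge0 : forall i, 0 <= mu i.
Hypothesis mu_sum1 : \esum_(i in [set: I]) (mu i)%:E = 1%E.
Hypothesis gammaE : \esum_(i in [set: I]) \esum_(j in [set: I])
  (mu i * P (inl i) (inl j))%:E = gamma%:E.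
Hypothesis mu_qsd : forall j : I,
  \esum_(i in [set: I]) (mu i * P (inl i) (inl j))%:E = (gamma * mu j)%:E.

Local Notation p j k := (P (inl j) (inl k)).
Local Notation e := (PtoE P).

Lemma PtoE_ge0 j : 0 <= e j.
Proof. by apply/fine_ge0/esum_ge0 => y _; rewrite lee_fin. Qed.

Lemma esum_P_I_add_PtoE j : (\esum_(k in [set: I]) (p j k)%:E + (e j)%:E = 1)%E.
Proof.
have := P_sum1 (inl j); rewrite esumT_sum => [|y]; last by rewrite lee_fin.
set A := esum _ _; set B := esum _ _ => AB1.
have A0 : (0 <= A)%E by apply: esum_ge0 => y _; rewrite lee_fin.
have B0 : (0 <= B)%E by apply: esum_ge0 => y _; rewrite lee_fin.
have B_fin : B \is a fin_num.
  by rewrite ge0_fin_numE // (@le_lt_trans _ _ 1%E) ?ltry // -AB1 leeDr.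
by rewrite /PtoE -/B fineK.
Qed.

Lemma P_I_add_PtoE_le1 j k : p j k + e j <= 1.
Proof.
rewrite -lee_fin -(esum_P_I_add_PtoE j) EFinD leeD2r //.
by apply: (@esumT_ge _ _ (fun k => (p j k)%:E)) => x; rewrite lee_fin.
Qed.

Lemma P_I_in01 j k : 0 <= p j k <= 1.
Proof. by rewrite P_ge0 /=; have := P_I_add_PtoE_le1 j k; have := PtoE_ge0 j; lra. Qed.

Lemma PtoE_in01 j : 0 <= e j <= 1.
Proof.
by rewrite PtoE_ge0 /=; have := P_I_add_PtoE_le1 j j; have := P_ge0 (inl j) (inl j); lra.
Qed.

Lemma mu_in01 i : 0 <= mu i <= 1.
Proof.
rewrite mu_ge0 -lee_fin -mu_sum1.
by apply: (@esumT_ge _ _ (fun k => (mu k)%:E)) => x; rewrite lee_fin.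
Qed.

Lemma PtoE_mu_in01 j k : 0 <= e j * mu k <= 1.
Proof.
case/andP: (PtoE_in01 j) => e0 e1; case/andP: (mu_in01 k) => m0 m1.
by rewrite mulr_ge0 // mulr_ile1.
Qed.

Lemma Qmat_in01 j k : 0 <= Qmat P mu j k <= 1.
Proof.
case/andP: (PtoE_mu_in01 j k) => em0 _; rewrite addr_ge0 ?P_ge0 //=.
apply: le_trans (P_I_add_PtoE_le1 j k); rewrite lerD2l -[leRHS]mulr1.
by apply: ler_wpM2l; [exact: PtoE_ge0 | case/andP: (mu_in01 k)].
Qed.

Lemma theta_in01 j k : 0 < Qmat P mu j k -> 0 <= theta P mu j k <= 1.
Proof.
move=> Q0; rewrite /theta divr_ge0 ?P_ge0 ?(ltW Q0) //= ler_pdivrMr // mul1r.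
by rewrite /Qmat lerDl; case/andP: (PtoE_mu_in01 j k).
Qed.

(* Summing the rows of P against mu splits the total mass 1 into gamma and
   the mass leaving I. *)
Lemma esum_mu_PtoE : \esum_(i in [set: I]) (mu i * e i)%:E = (1 - gamma)%:E.
Proof.
have mass : (gamma%:E + \esum_(i in [set: I]) (mu i * e i)%:E = 1%:E)%E.
  rewrite -mu_sum1 -gammaE -esumD; last 2 first.
  - by move=> i _; apply: esum_ge0 => j _; rewrite lee_fin mulr_ge0.
  - by move=> i _; rewrite lee_fin mulr_ge0 ?PtoE_ge0.
  apply: eq_esum => i _.
  rewrite -[(mu i)%:E]mule1 -(esum_P_I_add_PtoE i) ge0_muleDr; last 2 first.
  - by apply: esum_ge0 => k _; rewrite lee_fin.
  - by rewrite lee_fin PtoE_ge0.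
  by rewrite -esumZl // => k; rewrite lee_fin.
have : (0 <= \esum_(i in [set: I]) (mu i * e i)%:E)%E.
  by apply: esum_ge0 => i _; rewrite lee_fin mulr_ge0 ?PtoE_ge0.
move: mass; case: (esum _ _) => [r||] //.
by rewrite -EFinD => -[h] _; congr EFin; lra.
Qed.

Lemma Qmat_stationary j :
  \esum_(i in [set: I]) (mu i * Qmat P mu i j)%:E = (mu j)%:E.
Proof.
under eq_esum do rewrite mulrDr mulrA EFinD.
rewrite esumD; last 2 first.
- by move=> i _; rewrite lee_fin mulr_ge0.
- by move=> i _; rewrite lee_fin !mulr_ge0 ?PtoE_ge0.
rewrite mu_qsd; under eq_esum do rewrite EFinM.
rewrite esumZr // => [|i]; last by rewrite lee_fin mulr_ge0 ?PtoE_ge0.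
by rewrite esum_mu_PtoE -EFinM -EFinD; congr EFin; ring.
Qed.

Let Krow_entropy j k := negxlogx (p j k) + negxlogx (e j * mu k).

Lemma Krow_entropy_ge0 j k : 0 <= Krow_entropy j k.
Proof. by rewrite addr_ge0 // negxlogx_ge0 ?P_I_in01 ?PtoE_mu_in01. Qed.

Lemma zeta_ge0 a : 0 <= zeta P mu a.
Proof. by case: a => -[i j] [] /=; rewrite !mulr_ge0 ?P_ge0 ?PtoE_ge0. Qed.

Lemma Kmat_in01 a b : 0 <= Kmat P mu a b <= 1.
Proof.
case: a b => -[i j] s [[l k] t] /=; case: ifP => _; first by rewrite lexx ler01.
by case: t; [exact: P_I_in01 | exact: PtoE_mu_in01].
Qed.

Lemma esum_Kmat_row i j s :
  \esum_(b in [set: I * I * bool])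
     (zeta P mu (i, j, s) * negxlogx (Kmat P mu (i, j, s) b))%:E =
  \esum_(k in [set: I]) (zeta P mu (i, j, s) * Krow_entropy j k)%:E.
Proof.
have term0 b : (0 <= (zeta P mu (i, j, s) * negxlogx (Kmat P mu (i, j, s) b))%:E)%E.
  by rewrite lee_fin mulr_ge0 ?zeta_ge0 ?negxlogx_ge0 ?Kmat_in01.
rewrite esumT_pair // esumT_pair => [|l]; last by apply: esum_ge0.
rewrite (@esumT_single _ _ j); last 2 first.
- move=> l /eqP lj; apply: esum1 => k _; apply: esum1 => t _.
  by rewrite /= lj negxlogx0 mulr0.
- by apply: esum_ge0 => k _; apply: esum_ge0.
by apply: eq_esum => k _; rewrite esumT_bool ?term0 //= eqxx -EFinD -mulrDr.
Qed.

Lemma zeta_marginal j :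
  \esum_(i in [set: I]) (zeta P mu (i, j, true) + zeta P mu (i, j, false))%:E =
  (mu j)%:E.
Proof.
by rewrite -(Qmat_stationary j); apply: eq_esum => i _ /=; rewrite /Qmat; congr EFin; ring.
Qed.

Lemma chain_entropy_Kmat : chain_entropy (Kmat P mu) (zeta P mu) =
  \esum_(j in [set: I]) \esum_(k in [set: I]) (mu j * Krow_entropy j k)%:E.
Proof.
set z := fun i j => zeta P mu (i, j, true) + zeta P mu (i, j, false).
have zf0 i j k : (0 <= (z i j * Krow_entropy j k)%:E)%E.
  by rewrite lee_fin mulr_ge0 ?Krow_entropy_ge0 ?addr_ge0 ?zeta_ge0.
have row_ge0 a : (0 <= \esum_(b in [set: I * I * bool])
    (zeta P mu a * negxlogx (Kmat P mu a b))%:E)%E.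
  by apply: esum_ge0 => b _; rewrite lee_fin mulr_ge0 ?zeta_ge0 ?negxlogx_ge0 ?Kmat_in01.
rewrite /chain_entropy esumT_pair // esumT_pair => [|ij]; last exact: esum_ge0.
transitivity (\esum_(i in [set: I]) \esum_(j in [set: I])
    \esum_(k in [set: I]) (z i j * Krow_entropy j k)%:E)%E.
  apply: eq_esum => i _; apply: eq_esum => j _.
  rewrite esumT_bool // !esum_Kmat_row -esumD; last 2 first.
  - by move=> k _; rewrite lee_fin mulr_ge0 ?zeta_ge0 ?Krow_entropy_ge0.
  - by move=> k _; rewrite lee_fin mulr_ge0 ?zeta_ge0 ?Krow_entropy_ge0.
  by apply: eq_esum => k _; rewrite -EFinD -mulrDl.
rewrite exchange_esum => [|i j]; last exact: esum_ge0.
apply: eq_esum => j _; rewrite exchange_esum //; apply: eq_esum => k _.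
under eq_esum do rewrite EFinM.
rewrite esumZr ?Krow_entropy_ge0 // => [|i]; last by rewrite lee_fin addr_ge0 ?zeta_ge0.
by rewrite zeta_marginal -EFinM.
Qed.

Lemma Krow_entropy_Qmat j k : Krow_entropy j k = negxlogx (Qmat P mu j k) +
  (if 0 < Qmat P mu j k then Qmat P mu j k * Hbin (theta P mu j k) else 0).
Proof.
rewrite /Krow_entropy; case/andP: (PtoE_mu_in01 j k) => em0 _.
case: ifPn => Q0; first by rewrite negxlogxD_Hbin ?P_ge0.
rewrite /Qmat -leNgt in Q0 *.
have [-> ->] : p j k = 0 /\ e j * mu k = 0.
  by have := P_ge0 (inl j) (inl k); lra.
by rewrite !addr0 negxlogx0 addr0.
Qed.

Lemma chain_entropy_Kmat_Qmat : chain_entropy (Kmat P mu) (zeta P mu) =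
  (chain_entropy (Qmat P mu) mu
   + \esum_(i in [set: I]) \esum_(j in [set j | (0 < Qmat P mu i j)%R])
       (mu i * Qmat P mu i j * Hbin (theta P mu i j))%:E)%E.
Proof.
set H := fun i j => if 0 < Qmat P mu i j
  then mu i * Qmat P mu i j * Hbin (theta P mu i j) else 0.
have H0 i j : 0 <= H i j.
  rewrite /H; case: ifP => // Q0.
  by rewrite !mulr_ge0 ?(ltW Q0) ?Hbin_ge0 ?theta_in01.
transitivity (\esum_(i in [set: I]) \esum_(j in [set: I])
    ((mu i * negxlogx (Qmat P mu i j))%:E + (H i j)%:E))%E.
  rewrite chain_entropy_Kmat; apply: eq_esum => i _; apply: eq_esum => j _.
  by rewrite Krow_entropy_Qmat -EFinD /H mulrDr; case: ifP; rewrite ?mulr0 ?mulrA.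
rewrite esum2D => [|i j|i j]; last 2 first.
- by rewrite lee_fin mulr_ge0 ?negxlogx_ge0 ?Qmat_in01.
- by rewrite lee_fin.
congr (_ + _)%E; apply: eq_esum => i _; rewrite [RHS]esum_mkcond.
apply: eq_esum => j _; rewrite /H.
by case: ifPn => Q0; [rewrite mem_set | rewrite memNset //; apply/negP].
Qed.

Lemma esum_negxlogx_PtoE_mu :
  \esum_(j in [set: I]) \esum_(k in [set: I]) (mu j * negxlogx (e j * mu k))%:E =
  (\esum_(j in [set: I]) (mu j * negxlogx (e j))%:E +
   (1 - gamma)%:E * \esum_(k in [set: I]) (negxlogx (mu k))%:E)%E.
Proof.
have nmu0 k : 0 <= negxlogx (mu k) by rewrite negxlogx_ge0 ?mu_in01.
have mune0 j : 0 <= mu j * negxlogx (e j) by rewrite mulr_ge0 ?negxlogx_ge0 ?PtoE_in01.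
have mue0 j : 0 <= mu j * e j by rewrite mulr_ge0 ?PtoE_ge0.
have gamma_le1 : 0 <= 1 - gamma.
  by rewrite -lee_fin -esum_mu_PtoE; apply: esum_ge0 => j _; rewrite lee_fin.
transitivity (\esum_(j in [set: I]) \esum_(k in [set: I])
    ((mu j * e j)%:E * (negxlogx (mu k))%:E + (mu k)%:E * (mu j * negxlogx (e j))%:E))%E.
  apply: eq_esum => j _; apply: eq_esum => k _.
  by rewrite -!EFinM -EFinD negxlogxM ?PtoE_ge0 //; congr EFin; ring.
rewrite esum2D => [|j k|j k]; last 2 first.
- by rewrite -EFinM lee_fin mulr_ge0.
- by rewrite -EFinM lee_fin mulr_ge0.
rewrite addeC; congr (_ + _)%E.
  by apply: eq_esum => j _; rewrite esumZr ?mu_sum1 ?mul1e // => k; rewrite lee_fin.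
rewrite exchange_esum => [|j k]; last by rewrite -EFinM lee_fin mulr_ge0.
rewrite -esumZl //; apply: eq_esum => k _.
by rewrite esumZr ?esum_mu_PtoE // => j; rewrite lee_fin.
Qed.

Lemma chain_entropy_Kmat_P : chain_entropy (Kmat P mu) (zeta P mu) =
  (\esum_(i in [set: I]) (mu i * negxlogx (e i))%:E
   + ((1 - gamma)%:E * (\esum_(j in [set: I]) (negxlogx (mu j))%:E))
   + \esum_(i in [set: I]) \esum_(j in [set: I])
       (mu i * negxlogx (p i j))%:E)%E.
Proof.
rewrite chain_entropy_Kmat -esum_negxlogx_PtoE_mu addeC -esum2D => [|j k|j k].
- by apply: eq_esum => j _; apply: eq_esum => k _; rewrite -EFinD -mulrDr.
- by rewrite lee_fin mulr_ge0 ?negxlogx_ge0 ?P_I_in01.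
- by rewrite lee_fin mulr_ge0 ?negxlogx_ge0 ?PtoE_mu_in01.
Qed.

End quasi_stationary_chain.

Theorem proposition3 (R : realType) (I E : countType)
  (P : I + E -> I + E -> R) (mu : I -> R) (gamma : R)
  (* E nonempty *)
  (hE : exists e : E, True)
  (* P stochastic *)
  (hP0 : forall x y, 0 <= P x y)
  (hP1 : forall x, \esum_(y in [set: I + E]) (P x y)%:E = 1%E)
  (* every epsilon in E absorbing *)
  (habs : forall e : E, P (inr e) (inr e) = 1)
  (* P_I irreducible *)
  (hirr : irreducible_I P)
  (* sum_i P(i, E) > 0 *)
  (hPE : (0 < \esum_(i in [set: I]) (PtoE P i)%:E)%E)
  (* E reached a.s. from every i *)
  (hreach : forall i : I, reaches_E_as P i)
  (* mu a probability on I *)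
  (hmu0 : forall i, 0 <= mu i)
  (hmu1 : \esum_(i in [set: I]) (mu i)%:E = 1%E)
  (* gamma = sum_{i,j} mu(i) P(i,j), in (0,1) *)
  (hgamma : \esum_(i in [set: I]) \esum_(j in [set: I])
              (mu i * P (inl i) (inl j))%:E = gamma%:E)
  (hgamma01 : 0 < gamma < 1)
  (* quasi-stationarity: mu^t P_I = gamma mu^t *)
  (hqsd : forall j : I,
     \esum_(i in [set: I]) (mu i * P (inl i) (inl j))%:E = (gamma * mu j)%:E) :
  chain_entropy (Kmat P mu) (zeta P mu)
    = (chain_entropy (Qmat P mu) mu
       + \esum_(i in [set: I]) \esum_(j in [set j | (0 < Qmat P mu i j)%R])
           (mu i * Qmat P mu i j * Hbin (theta P mu i j))%:E)%E
  /\
  chain_entropy (Kmat P mu) (zeta P mu)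
    = (\esum_(i in [set: I]) (mu i * negxlogx (PtoE P i))%:E
       + ((1 - gamma)%:E * (\esum_(j in [set: I]) (negxlogx (mu j))%:E))
       + \esum_(i in [set: I]) \esum_(j in [set: I])
           (mu i * negxlogx (P (inl i) (inl j)))%:E)%E.
Proof.
split.
- exact: chain_entropy_Kmat_Qmat hP0 hP1 hmu0 hmu1 hgamma hqsd.
- exact: chain_entropy_Kmat_P hP0 hP1 hmu0 hmu1 hgamma hqsd.
Qed.
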